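(* For every formula $A$ of $\mathbf{L_1}$, if not $\vdash_T A$, then $\dashv_H A$.
   Context: Formulas of $\mathbf{L_1}$: built from atomic formulas $\epsilon ab$ ($a,b$ name variables, possibly equal) with primitive connectives $\vee,\sim$; $\wedge,\supset,\equiv$ defined as usual. Disjunctions may be associated in any way. $\vdash_H A$: $A$ belongs to the smallest set containing all instances of classical propositional tautologies and all formulas $\epsilon ab\supset\epsilon aa$, $(\epsilon ab\wedge\epsilon bc)\supset\epsilon ac$, $(\epsilon ab\wedge\epsilon bb)\supset\epsilon ba$, closed under modus ponens. Positive/negative parts (occurrences): $A$ is a positive part of $A$; if $B\vee C$ is a positive part then $B,C$ are positive parts; if $\sim B$ is a positive part then $B$ is a negative part; if $\sim B$ is a negative part then $B$ is a positive part. $F[B_+]$ ($G[B_-]$) denotes a formula with a specified occurrence of $B$ as positive (negative) part; $F[B_+,C_-]$ etc. denote specified non-overlapping occurrences. Tableaux: reduction rules ($\vee_-$) $G[B\vee C_-]$ $\mapsto$ two branches $G[B\vee C_-]\vee\sim B$, $G[B\vee C_-]\vee\sim C$; ($\epsilon_1$) $G[\epsilon ab_-]\mapsto G[\epsilon ab_-]\vee\sim\epsilon aa$; ($\epsilon_2$) $G[\epsilon ab_-,\epsilon bc_-]\mapsto G[\epsilon ab_-,\epsilon bc_-]\vee\sim\epsilon ac$; ($\epsilon_{3b}$) $G[\epsilon ab_-,\epsilon bb_-]\mapsto G[\epsilon ab_-,\epsilon bb_-]\vee\sim\epsilon ba$. A tableau for $A$ is a finite tree with root $A$ whose non-leaf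 nodes have as children the result of applying one rule. A branch is closed if its last formula has the form $F[B_+,B_-]$; a tableau is closed if all branches are. $\vdash_T A$: $A$ has a closed tableau. Hintikka formula: a formula $H$ such that (1) $H$ is not of the form $F[B_+,B_-]$; (2) if $B\vee C$ is a negative part of $H$ then $B$ or $C$ is; (3) if $\epsilon ab$ is a negative part then so is $\epsilon aa$; (4) if $\epsilon ab,\epsilon bc$ are negative parts then so is $\epsilon ac$; (5) if $\epsilon ab,\epsilon bb$ are negative parts then so is $\epsilon ba$. $\mathbf{HAR}$: fix a name variable $a_0$; $\dashv_H$ is the smallest set such that $\dashv_H\epsilon a_0a_0$; $\dashv_H\sim\epsilon a_0a_0$; if $\vdash_H A\supset B$ and $\dashv_H B$ then $\dashv_H A$; if $\dashv_H A$ and $A$ is obtained from $B$ by uniform substitution of name variables for name variables then $\dashv_H B$; if $A$ is a Hintikka formula that is a disjunction of atomic or negated atomic formulas, $\dashv_H A$, and $\epsilon ab$ is not a negative part of $A$, then $\dashv_H A\vee\epsilon ab$. *)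

From Stdlib Require Import Bool.

Definition name := nat.

Inductive form : Type :=
| Eps : name -> name -> form
| Or  : form -> form -> form
| Neg : form -> form.

Definition And (A B : form) : form := Neg (Or (Neg A) (Neg B)).
Definition Imp (A B : form) : form := Or (Neg A) B.
Definition Equiv (A B : form) : form := And (Imp A B) (Imp B A).

Fixpoint eval (v : name -> name -> bool) (A : form) : bool :=
  match A with
  | Eps a b => v a b
  | Or B C => eval v B || eval v C
  | Neg B => negb (eval v B)
  end.

Definition taut (A : form) : Prop := forall v, eval v A = true.

Inductive provH : form -> Prop :=
| provH_taut A : taut A -> provH A
| provH_ax1 a b : provH (Imp (Eps a b) (Eps a a))
| provH_ax2 a b c : provH (Imp (And (Eps a b) (Eps b c)) (Eps a c))
| provH_ax3 a b : provH (Imp (And (Eps a b) (Eps b b)) (Eps b a))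
| provH_mp A B : provH (Imp A B) -> provH A -> provH B.

(** Positive / negative parts: pospart B A means "B is a positive part of A"
    (i.e. some occurrence of B in A is a positive part). *)
Inductive pospart : form -> form -> Prop :=
| pos_self A : pospart A A
| pos_orl A B C : pospart (Or B C) A -> pospart B A
| pos_orr A B C : pospart (Or B C) A -> pospart C A
| pos_negneg A B : negpart (Neg B) A -> pospart B A
with negpart : form -> form -> Prop :=
| neg_negpos A B : pospart (Neg B) A -> negpart B A.

Definition closedf (A : form) : Prop :=
  exists B, pospart B A /\ negpart B A.

(** "A has a closed tableau": an inductive derivation tree whose nodes are
    rule applications and whose leaves are closed formulas. *)
Inductive provT : form -> Prop :=
| T_close A : closedf A -> provT A
| T_or A B C : negpart (Or B C) A ->
    provT (Or A (Neg B)) -> provT (Or A (Neg C)) -> provT A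
| T_eps1 A a b : negpart (Eps a b) A ->
    provT (Or A (Neg (Eps a a))) -> provT A
| T_eps2 A a b c : negpart (Eps a b) A -> negpart (Eps b c) A ->
    provT (Or A (Neg (Eps a c))) -> provT A
| T_eps3b A a b : negpart (Eps a b) A -> negpart (Eps b b) A ->
    provT (Or A (Neg (Eps b a))) -> provT A.

Definition hintikka (H : form) : Prop :=
  ~ closedf H /\
  (forall B C, negpart (Or B C) H -> negpart B H \/ negpart C H) /\
  (forall a b, negpart (Eps a b) H -> negpart (Eps a a) H) /\
  (forall a b c, negpart (Eps a b) H -> negpart (Eps b c) H ->
                 negpart (Eps a c) H) /\
  (forall a b, negpart (Eps a b) H -> negpart (Eps b b) H ->
               negpart (Eps b a) H).

Inductive litdisj : form -> Prop :=
| ld_atom a b : litdisj (Eps a b)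
| ld_natom a b : litdisj (Neg (Eps a b))
| ld_or A B : litdisj A -> litdisj B -> litdisj (Or A B).

Fixpoint subst (s : name -> name) (A : form) : form :=
  match A with
  | Eps a b => Eps (s a) (s b)
  | Or B C => Or (subst s B) (subst s C)
  | Neg B => Neg (subst s B)
  end.

Inductive rejH (a0 : name) : form -> Prop :=
| R_ax1 : rejH a0 (Eps a0 a0)
| R_ax2 : rejH a0 (Neg (Eps a0 a0))
| R_mp A B : provH (Imp A B) -> rejH a0 B -> rejH a0 A
| R_subst A B s : rejH a0 A -> A = subst s B -> rejH a0 B
| R_hint A a b : hintikka A -> litdisj A -> rejH a0 A ->
    ~ negpart (Eps a b) A -> rejH a0 (Or A (Eps a b)).

From Stdlib Require Import Bool List Arith Lia Classical Wf_nat.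
Import ListNotations.

(** All formulas a tableau for [A] can introduce lie in a
       finite universe (subformulas of [A] and atoms over its names).  If [A]
       has no closed tableau, some rule adds a new universe formula while
       keeping the tableau open, unless the formula is already Hintikka; by
       induction on the number of universe formulas not yet negative parts,
       [A] is a positive part of a Hintikka formula [H].
    3. Countermodel.  Falsifying the positive atoms of [H] and verifying its
       negative atoms falsifies [A].
    4. Rejection.  The disjunction of the negated negative atoms of [H] is
       rejected (identify all names with [a0]); the positive atoms of [H] are
       then added one by one by the Hintikka rule of HAR, every intermediate
       clause being Hintikka because it mirrors [H].  The final clause [K]
       satisfies [|- A -> K] by step 3, so [A] is rejected by modus ponens. *)

(** * Signed parts as a computable list *)

(** A negative disjunction is opaque. *)
Fixpoint parts (q : bool) (A : form) : list (bool * form) :=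
  (q, A) :: match A with
            | Eps _ _ => []
            | Or B C => if q then parts true B ++ parts true C else []
            | Neg B => parts (negb q) B
            end.

Lemma parts_self q A : In (q, A) (parts q A).
Proof. destruct A; now left. Qed.

Lemma parts_trans A : forall q p Z r Y,
  In (p, Z) (parts q A) -> In (r, Y) (parts p Z) -> In (r, Y) (parts q A).
Proof.
  induction A as [a b | B IHB C IHC | B IHB]; intros q p Z r Y HZ HY;
    destruct HZ as [E | HZ]; try (injection E as <- <-; exact HY).
  - destruct HZ.
  - destruct q; [| destruct HZ]. right.
    apply in_app_iff in HZ as [HZ | HZ]; apply in_app_iff; eauto.
  - right. eauto.
Qed.

Scheme pospart_min := Minimality for pospart Sort Prop
  with negpart_min := Minimality for negpart Sort Prop.
Combined Scheme part_min from pospart_min, negpart_min.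

Lemma parts_complete :
  (forall Z A, pospart Z A -> In (true, Z) (parts true A)) /\
  (forall Z A, negpart Z A -> In (false, Z) (parts true A)).
Proof.
  apply part_min; intros; [apply parts_self | ..];
    (eapply parts_trans; [eassumption |]); simpl; auto using in_or_app, parts_self.
Qed.

Definition part (p : bool) (Z R : form) : Prop :=
  if p then pospart Z R else negpart Z R.

Lemma parts_sound R A : forall q p Z,
  part q A R -> In (p, Z) (parts q A) -> part p Z R.
Proof.
  induction A as [a b | B IHB C IHC | B IHB]; intros q p Z HA HZ;
    destruct HZ as [E | HZ]; try (injection E as <- <-; exact HA).
  - destruct HZ.
  - destruct q; [| destruct HZ].
    apply in_app_iff in HZ as [HZ | HZ];
      [apply (IHB true) | apply (IHC true)]; auto; simpl in *; eauto using pospart.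
  - destruct q; simpl in *; eapply IHB; eauto; simpl; eauto using pospart, negpart.
Qed.

Lemma pospart_parts Z A : pospart Z A <-> In (true, Z) (parts true A).
Proof.
  split; [apply parts_complete |]. intro H. exact (parts_sound A A true true Z (pos_self A) H).
Qed.

Lemma negpart_parts Z A : negpart Z A <-> In (false, Z) (parts true A).
Proof.
  split; [apply parts_complete |]. intro H. exact (parts_sound A A true false Z (pos_self A) H).
Qed.

(** * Subformulas and the finite universe of a tableau *)

Fixpoint subforms (A : form) : list form :=
  A :: match A with
       | Eps _ _ => []
       | Or B C => subforms B ++ subforms C
       | Neg B => subforms B
       end.

Lemma subforms_self A : In A (subforms A).
Proof. destruct A; now left. Qed.

Lemma subforms_trans A X Y :
  In X (subforms A) -> In Y (subforms X) -> In Y (subforms A).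
Proof.
  induction A as [a b | B IHB C IHC | B IHB]; intros HX HY;
    destruct HX as [<- | HX]; auto; simpl in *.
  - destruct HX.
  - right. apply in_app_iff in HX as [HX | HX]; apply in_app_iff; auto.
  - auto.
Qed.

Lemma parts_subforms A : forall q p Z, In (p, Z) (parts q A) -> In Z (subforms A).
Proof.
  induction A as [a b | B IHB C IHC | B IHB]; intros q p Z HZ;
    destruct HZ as [E | HZ]; try (injection E as _ <-; now left); right.
  - destruct HZ.
  - destruct q; [| destruct HZ].
    apply in_app_iff in HZ as [HZ | HZ]; apply in_app_iff; eauto.
  - eauto.
Qed.

Definition names (A : form) : list name :=
  flat_map (fun X => match X with Eps a b => [a; b] | _ => [] end) (subforms A).

Definition atoms_over (ns : list name) : list form :=
  flat_map (fun a => map (Eps a) ns) ns.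

(** The universe of a tableau for [A0]: the formulas a rule may ever
    introduce, namely subformulas of [A0] and atoms over its names. *)
Definition universe (A0 : form) : list form := subforms A0 ++ atoms_over (names A0).

Lemma universe_subforms A0 X Y :
  In X (universe A0) -> In Y (subforms X) -> In Y (universe A0).
Proof.
  unfold universe, atoms_over. rewrite !in_app_iff, !in_flat_map.
  intros [HX | [a [Ha HX]]] HY; [left; eauto using subforms_trans |].
  apply in_map_iff in HX as [b [<- Hb]]. destruct HY as [<- | []]. eauto using in_map.
Qed.

Lemma names_atom A a b : In (Eps a b) (subforms A) -> In a (names A) /\ In b (names A).
Proof. intro H. unfold names. split; apply in_flat_map; exists (Eps a b); simpl; auto. Qed.

Lemma universe_atom A0 a b :
  In (Eps a b) (universe A0) <-> In a (names A0) /\ In b (names A0).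
Proof.
  unfold universe, atoms_over. rewrite in_app_iff, in_flat_map. split.
  - intros [H | [c [Hc H]]]; [now apply names_atom |].
    apply in_map_iff in H as [d [E Hd]]. injection E as -> ->. auto.
  - intros [Ha Hb]. right. exists a. split; [exact Ha | apply in_map, Hb].
Qed.

(** * Saturation: a formula without closed tableau extends to a Hintikka formula *)

Lemma filter_length_mono {T} (f g : T -> bool) (l : list T) :
  (forall y, In y l -> f y = true -> g y = true) ->
  length (filter f l) <= length (filter g l).
Proof.
  induction l as [| y l IH]; intros Hfg; simpl; [lia |].
  specialize (IH (fun z Hz => Hfg z (or_intror Hz))).
  specialize (Hfg y (or_introl eq_refl)).
  destruct (f y), (g y); simpl; try lia. all: discriminate (Hfg eq_refl).
Qed.

Lemma filter_length_lt {T} (f g : T -> bool) (l : list T) x :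
  (forall y, In y l -> f y = true -> g y = true) ->
  In x l -> g x = true -> f x = false ->
  length (filter f l) < length (filter g l).
Proof.
  induction l as [| y l IH]; intros Hfg Hx Hgx Hfx; [destruct Hx |].
  assert (Hle := filter_length_mono f g l (fun z Hz => Hfg z (or_intror Hz))).
  simpl. destruct Hx as [<- | Hx].
  - rewrite Hfx, Hgx. simpl. lia.
  - specialize (IH (fun z Hz => Hfg z (or_intror Hz)) Hx Hgx Hfx).
    specialize (Hfg y (or_introl eq_refl)).
    destruct (f y), (g y); simpl; try lia. all: discriminate (Hfg eq_refl).
Qed.

Lemma expand_negpart_old A B X : negpart X A -> negpart X (Or A (Neg B)).
Proof. rewrite !negpart_parts. simpl. auto using in_or_app. Qed.

Lemma expand_negpart_new A B : negpart B (Or A (Neg B)).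
Proof.
  rewrite negpart_parts. right. apply in_or_app. right. right. apply parts_self.
Qed.

Lemma expand_negpart_inv A B X :
  negpart X (Or A (Neg B)) -> negpart X A \/ In X (subforms B).
Proof.
  rewrite !negpart_parts. intros [E | HX]; [discriminate |].
  apply in_app_iff in HX as [HX | [E | HX]]; [auto | discriminate |].
  right. eapply parts_subforms; eauto.
Qed.

Lemma expand_pospart A B H : pospart (Or A (Neg B)) H -> pospart A H.
Proof.
  rewrite !pospart_parts. intro HA. eapply parts_trans; [exact HA |].
  right. apply in_or_app. left. apply parts_self.
Qed.

Definition form_eq_dec (X Y : form) : {X = Y} + {X <> Y}.
Proof. decide equality; apply Nat.eq_dec. Defined.

Definition signed_eq_dec (x y : bool * form) : {x = y} + {x <> y}.
Proof. decide equality; auto using bool_dec, form_eq_dec. Defined.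

Section Saturation.

Variable A0 : form.

(** The formulas of the universe that are not yet negative parts of [A];
    each tableau step with a new formula shortens this list. *)
Definition missing (A : form) : list form :=
  filter (fun X => if in_dec signed_eq_dec (false, X) (parts true A) then false else true)
         (universe A0).

Lemma missing_expand A B :
  In B (universe A0) -> ~ negpart B A ->
  length (missing (Or A (Neg B))) < length (missing A).
Proof.
  intros HB HnB. apply filter_length_lt with B; [| exact HB | |].
  - intros X _.
    destruct (in_dec signed_eq_dec (false, X) (parts true A)) as [HX | _]; [| reflexivity].
    destruct (in_dec signed_eq_dec (false, X) (parts true (Or A (Neg B)))) as [_ | HX'];
      [discriminate |].
    rewrite <- !negpart_parts in *. now destruct HX'; apply expand_negpart_old.
  - destruct (in_dec _ _ _) as [HX | _]; [| reflexivity].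
    rewrite <- negpart_parts in HX. contradiction.
  - destruct (in_dec _ _ _) as [_ | HX]; [reflexivity |].
    rewrite <- negpart_parts in HX. destruct (HX (expand_negpart_new A B)).
Qed.

(** A formula all of whose negative parts lie in the universe, with no
    closed tableau and no unprovable expansion by a new universe formula,
    is Hintikka: every Hintikka condition that failed would give a rule
    application closing the tableau. *)
Lemma saturated_hintikka A :
  (forall X, negpart X A -> In X (universe A0)) -> ~ provT A ->
  (forall B, In B (universe A0) -> ~ negpart B A -> provT (Or A (Neg B))) ->
  hintikka A.
Proof.
  intros HU HT Hsat.
  assert (Hnew : forall B, In B (universe A0) ->
                 (provT (Or A (Neg B)) -> provT A) -> negpart B A).
  { intros B HB Hrule. apply NNPP. intro HnB. exact (HT (Hrule (Hsat B HB HnB))). }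
  assert (Hnames : forall a b, negpart (Eps a b) A -> In a (names A0) /\ In b (names A0)).
  { intros a b H. apply universe_atom, HU, H. }
  split; [| split; [| split; [| split]]].
  - intro Hc. exact (HT (T_close A Hc)).
  - intros B C H.
    assert (HBC : forall Y, In Y (subforms (Or B C)) -> In Y (universe A0))
      by eauto using universe_subforms.
    destruct (classic (negpart B A)) as [HB | HB]; [now left | right].
    apply Hnew; [apply HBC; simpl; auto using in_or_app, subforms_self |].
    intro HC. apply (T_or A B C H); [apply Hsat | exact HC]; auto.
    apply HBC. simpl. auto using in_or_app, subforms_self.
  - intros a b H. destruct (Hnames a b H).
    apply Hnew; [now apply universe_atom | exact (T_eps1 A a b H)].
  - intros a b c H1 H2. destruct (Hnames a b H1), (Hnames b c H2).
    apply Hnew; [now apply universe_atom | exact (T_eps2 A a b c H1 H2)].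
  - intros a b H1 H2. destruct (Hnames a b H1).
    apply Hnew; [now apply universe_atom | exact (T_eps3b A a b H1 H2)].
Qed.

Lemma saturation A :
  (forall X, negpart X A -> In X (universe A0)) -> ~ provT A ->
  exists H, hintikka H /\ pospart A H.
Proof.
  induction A as [A IH] using (induction_ltof1 _ (fun A => length (missing A))).
  intros HU HT.
  destruct (classic (hintikka A)) as [Hh | Hnh]; [now exists A; split; [| apply pos_self] |].
  destruct (classic (exists B, In B (universe A0) /\ ~ negpart B A /\
                               ~ provT (Or A (Neg B)))) as [[B [HB [HnB HTB]]] | Hno].
  - destruct (IH (Or A (Neg B))) as [H [Hh HAH]]; auto.
    + now apply missing_expand.
    + intros X HX. destruct (expand_negpart_inv _ _ _ HX); eauto using universe_subforms.
    + exists H. eauto using expand_pospart.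
  - exfalso. apply Hnh, saturated_hintikka; auto.
    intros B HB HnB. apply NNPP. intro HTB. eauto.
Qed.

End Saturation.

(** * Hintikka formulas are falsifiable *)

Lemma hintikka_countermodel H v : hintikka H ->
  (forall a b, pospart (Eps a b) H -> v a b = false) ->
  (forall a b, negpart (Eps a b) H -> v a b = true) ->
  forall X, (pospart X H -> eval v X = false) /\ (negpart X H -> eval v X = true).
Proof.
  intros [_ [Hor _]] Hpos Hneg X.
  induction X as [a b | B IHB C IHC | B IHB]; simpl; [split; auto | split | split]; intro HX.
  - rewrite (proj1 IHB (pos_orl _ _ _ HX)), (proj1 IHC (pos_orr _ _ _ HX)). reflexivity.
  - destruct (Hor _ _ HX) as [HB | HC].
    + now rewrite (proj2 IHB HB).
    + now rewrite (proj2 IHC HC), orb_true_r.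
  - now rewrite (proj2 IHB (neg_negpos _ _ HX)).
  - now rewrite (proj1 IHB (pos_negneg _ _ HX)).
Qed.

Definition atom (Z : form) : Prop := exists a b, Z = Eps a b.

Definition signed_atoms (p : bool) (H : form) : list form :=
  flat_map (fun x => match x with
                     | (q, Eps a b) => if Bool.eqb q p then [Eps a b] else []
                     | _ => []
                     end) (parts true H).

Lemma signed_atoms_spec p H Z :
  In Z (signed_atoms p H) <-> atom Z /\ In (p, Z) (parts true H).
Proof.
  unfold signed_atoms. rewrite in_flat_map. split.
  - intros [[q [a b | B C | B]] [Hx HZ]]; try destruct HZ.
    destruct (Bool.eqb q p) eqn:Eq; [| destruct HZ].
    apply Bool.eqb_prop in Eq as ->. destruct HZ as [<- | []]. split; [now exists a, b | exact Hx].
  - intros [[a [b ->]] HZ]. exists (p, Eps a b). rewrite Bool.eqb_reflx. simpl. auto.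
Qed.

Definition disj (X : form) (Ys : list form) : form := fold_left Or Ys X.

Lemma eval_disj v X Ys :
  eval v (disj X Ys) = false <-> eval v X = false /\ forall Y, In Y Ys -> eval v Y = false.
Proof.
  unfold disj. revert X. induction Ys as [| Y Ys IH]; intro X; simpl.
  - split; [intro HX; split; [exact HX | intros _ []] | tauto].
  - rewrite IH. simpl. rewrite orb_false_iff. split.
    + intros [[HX HY] HYs]. split; [exact HX |]. intros Z [<- | HZ]; auto.
    + intros [HX HYs]. auto.
Qed.

Lemma litdisj_disj X Ys : litdisj X -> (forall Y, In Y Ys -> litdisj Y) -> litdisj (disj X Ys).
Proof.
  revert X. induction Ys as [| Y Ys IH]; intros X HX HYs; [exact HX |].
  apply IH; [constructor |]; auto using in_eq, in_cons.
Qed.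

Lemma parts_disj_inv X Ys p Z : In (p, Z) (parts true (disj X Ys)) ->
  (p = true /\ exists B C, Z = Or B C) \/ In (p, Z) (parts true X) \/
  exists Y, In Y Ys /\ In (p, Z) (parts true Y).
Proof.
  revert X. induction Ys as [| Y Ys IH]; intros X HZ; [now right; left |].
  destruct (IH _ HZ) as [HOr | [[E | HZ'] | [Y' [HY' HZ']]]].
  - now left.
  - injection E as -> <-. left. eauto.
  - apply in_app_iff in HZ' as [HZ' | HZ']; [now right; left |].
    right; right. exists Y. simpl. auto.
  - right; right. exists Y'. simpl. auto.
Qed.

Lemma parts_disj_intro X Ys p Z :
  In (p, Z) (parts true X) \/ (exists Y, In Y Ys /\ In (p, Z) (parts true Y)) ->
  In (p, Z) (parts true (disj X Ys)).
Proof.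
  revert X. induction Ys as [| Y Ys IH]; intros X HZ; simpl in *.
  - destruct HZ as [HZ | [Y [[] _]]]. exact HZ.
  - apply IH. destruct HZ as [HZ | [Y' [[<- | HY'] HZ]]].
    + left. right. apply in_app_iff. auto.
    + left. right. apply in_app_iff. auto.
    + right. eauto.
Qed.

(** * Rejecting literal clauses that mirror a Hintikka formula *)

Lemma eval_subst v s A : eval v (subst s A) = eval (fun a b => v (s a) (s b)) A.
Proof. induction A; simpl; congruence. Qed.

(** A disjunction of negated atoms is rejected: identifying all names with
    [a0] turns it into a formula implying [~ eps a0 a0]. *)
Lemma negative_clause_rejected a0 n r : (forall Z, In Z (n :: r) -> atom Z) ->
  rejH a0 (disj (Neg n) (map Neg r)).
Proof.
  intro Hat.
  apply (R_subst a0 (subst (fun _ => a0) (disj (Neg n) (map Neg r))) _ (fun _ => a0));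
    [| reflexivity].
  apply (R_mp a0 _ (Neg (Eps a0 a0))); [| apply R_ax2].
  apply provH_taut. intro v. simpl. rewrite eval_subst.
  destruct (v a0 a0) eqn:E; [| apply orb_true_r]. rewrite orb_false_r.
  apply negb_true_iff, eval_disj. split.
  - destruct (Hat n (or_introl eq_refl)) as [a [b ->]]. simpl; now rewrite ?E.
  - intros Y HY. apply in_map_iff in HY as [Z [<- HZ]].
    destruct (Hat Z (or_intror HZ)) as [a [b ->]]. simpl; now rewrite ?E.
Qed.

Lemma parts_negated_atom X p Z : atom X -> In (p, Z) (parts true (Neg X)) ->
  (p = true /\ ~ atom Z) \/ (p = false /\ Z = X).
Proof.
  intros [a [b ->]] [E | [E | []]]; injection E as <- <-; [left | right]; auto.
  split; [reflexivity |]. intros [c [d E]]. discriminate E.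
Qed.

Lemma negative_clause_parts n r p Z : (forall Y, In Y (n :: r) -> atom Y) ->
  In (p, Z) (parts true (disj (Neg n) (map Neg r))) ->
  (p = true /\ ~ atom Z) \/ (p = false /\ In Z (n :: r)).
Proof.
  intros Hat HZ. apply parts_disj_inv in HZ as [[-> [B [C ->]]] | [HZ | [Y [HY HZ]]]].
  - left. split; [reflexivity |]. intros [a [b E]]. discriminate E.
  - destruct (parts_negated_atom n p Z) as [? | [? ->]]; simpl; auto using in_eq.
  - apply in_map_iff in HY as [X [<- HX]].
    destruct (parts_negated_atom X p Z) as [? | [? ->]]; simpl; auto using in_cons.
Qed.

Lemma negative_clause_negpart n r Z : In Z (n :: r) -> negpart Z (disj (Neg n) (map Neg r)).
Proof.
  intro HZ. apply negpart_parts, parts_disj_intro.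
  destruct HZ as [<- | HZ]; [left | right].
  - right. apply parts_self.
  - exists (Neg Z). split; [now apply in_map | right; apply parts_self].
Qed.

Section Clauses.

Variable H : form.
Hypothesis H_hintikka : hintikka H.

Definition clause_of (F : form) : Prop :=
  litdisj F /\
  (forall Z, negpart Z F <-> atom Z /\ negpart Z H) /\
  (forall Z, atom Z -> pospart Z F -> ~ negpart Z H).

Lemma clause_hintikka F : clause_of F -> hintikka F.
Proof.
  intros [_ [Hneg Hpos]].
  destruct H_hintikka as [_ [_ [Heps1 [Heps2 Heps3]]]].
  split; [| split; [| split; [| split]]]; try setoid_rewrite Hneg.
  - intros [Z [HZp HZn]]. apply Hneg in HZn as [HZ HZn]. exact (Hpos Z HZ HZp HZn).
  - intros B C [[a [b E]] _]. discriminate E.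
  - intros a b [_ Hab]. split; [now exists a, a | eauto].
  - intros a b c [_ Hab] [_ Hbc]. split; [now exists a, c | eauto].
  - intros a b [_ Hab] [_ Hbb]. split; [now exists b, a | eauto].
Qed.

Lemma clause_extend F e : clause_of F -> atom e -> ~ negpart e H ->
  clause_of (Or F e) /\ ~ negpart e F.
Proof.
  intros [Hlit [Hneg Hpos]] [a [b ->]] He.
  assert (Hparts : forall p Z, In (p, Z) (parts true (Or F (Eps a b))) <->
                   (p, Z) = (true, Or F (Eps a b)) \/ In (p, Z) (parts true F) \/
                   (p, Z) = (true, Eps a b)).
  { intros p Z. simpl. rewrite in_app_iff. simpl. intuition. }
  split; [split; [| split] | rewrite Hneg; tauto].
  - constructor; [exact Hlit | constructor].
  - intro Z. rewrite <- Hneg, !negpart_parts, Hparts. intuition discriminate.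
  - intros Z HZ HZp. rewrite pospart_parts, Hparts, <- pospart_parts in HZp.
    destruct HZp as [E | [HZp | E]].
    + injection E as E. destruct HZ as [c [d ->]]. discriminate E.
    + exact (Hpos Z HZ HZp).
    + injection E as ->. exact He.
Qed.

Lemma clause_rejected a0 F Ps : clause_of F -> rejH a0 F ->
  (forall e, In e Ps -> atom e /\ ~ negpart e H) -> rejH a0 (disj F Ps).
Proof.
  revert F. induction Ps as [| e Ps IH]; intros F HF HrF HPs; [exact HrF |].
  destruct (HPs e (or_introl eq_refl)) as [He HeH].
  destruct (clause_extend F e HF He HeH) as [HFe HeF].
  apply IH; [exact HFe | | intros e' He'; apply HPs, in_cons, He'].
  destruct He as [a [b ->]].
  apply R_hint; [apply clause_hintikka | apply HF | |]; assumption.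
Qed.

(** The starting clause: the disjunction of the negated negative atoms of
    [H], or [eps a0 a0] if there are none.  It is rejected, and it is false
    only when all negative atoms of [H] are true. *)
Lemma base_clause a0 : exists K, clause_of K /\ rejH a0 K /\
  forall v, eval v K = false -> forall a b, negpart (Eps a b) H -> v a b = true.
Proof.
  assert (HN : forall Z, In Z (signed_atoms false H) <-> atom Z /\ negpart Z H).
  { intro Z. now rewrite signed_atoms_spec, negpart_parts. }
  destruct (signed_atoms false H) as [| n r] eqn:EN.
  - exists (Eps a0 a0). split; [split; [| split] | split; [apply R_ax1 |]].
    + constructor.
    + intro Z. rewrite <- HN, negpart_parts. simpl. intuition discriminate.
    + intros Z HZ _ HZH. now apply (HN Z).
    + intros v _ a b Hab. destruct (proj2 (HN _) (conj (ex_intro _ a (ex_intro _ b eq_refl)) Hab)).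
  - assert (Hat : forall Z, In Z (n :: r) -> atom Z) by (intros Z HZ; now apply HN).
    exists (disj (Neg n) (map Neg r)).
    split; [split; [| split] | split; [now apply negative_clause_rejected |]].
    + apply litdisj_disj.
      * destruct (Hat n (in_eq _ _)) as [a [b ->]]. repeat constructor.
      * intros Y HY. apply in_map_iff in HY as [Z [<- HZ]].
        destruct (Hat Z (in_cons _ _ _ HZ)) as [a [b ->]]. repeat constructor.
    + intro Z. rewrite <- HN. split; [| apply negative_clause_negpart].
      rewrite negpart_parts. intro HZ.
      now destruct (negative_clause_parts n r false Z Hat HZ) as [[E _] | [_ HZ']].
    + intros Z HZ HZp. rewrite pospart_parts in HZp.
      now destruct (negative_clause_parts n r true Z Hat HZp) as [[_ HnZ] | [E _]].
    + intros v Hv a b Hab. apply eval_disj in Hv as [Hn Hr].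
      assert (HabN : In (Eps a b) (n :: r)) by (apply HN; split; [now exists a, b | exact Hab]).
      destruct HabN as [-> | HabR].
      * now apply negb_false_iff.
      * apply negb_false_iff, (Hr (Neg (Eps a b))), in_map, HabR.
Qed.

End Clauses.

(** The clause [K] collecting the negated negative atoms of [H] and its
    positive atoms is rejected, and [A -> K] is a tautology, since a
    valuation falsifying [K] is a countermodel of [H] and hence of its
    positive part [A]; so [A] is rejected by modus ponens. *)
Theorem corollary3p2 (a0 : name) (A : form) : ~ provT A -> rejH a0 A.
Proof.
  intro HT.
  destruct (saturation A A) as [H [HH HAH]]; [| exact HT |].
  { intros X HX. apply in_or_app. left.
    apply negpart_parts in HX. eapply parts_subforms; eauto. }
  destruct (base_clause H a0) as [K0 [HK0 [HrK0 HK0val]]].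
  assert (HP : forall Z, In Z (signed_atoms true H) <-> atom Z /\ pospart Z H).
  { intro Z. now rewrite signed_atoms_spec, pospart_parts. }
  apply (R_mp a0 A (disj K0 (signed_atoms true H))).
  - apply provH_taut. intro v. simpl.
    destruct (eval v (disj K0 (signed_atoms true H))) eqn:EK; [apply orb_true_r |].
    apply eval_disj in EK as [EK0 EP].
    assert (Hpos : forall a b, pospart (Eps a b) H -> v a b = false).
    { intros a b Hab. apply (EP (Eps a b)), HP. split; [now exists a, b | exact Hab]. }
    now rewrite (proj1 (hintikka_countermodel H v HH Hpos (HK0val v EK0) A) HAH).
  - apply (clause_rejected H HH a0 K0); [exact HK0 | exact HrK0 |].
    intros e He. apply HP in He as [Hat Hpos]. split; [exact Hat |].
    intro Hneg. destruct HH as [Hnc _]. exact (Hnc (ex_intro _ e (conj Hpos Hneg))).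
Qed.
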